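(* Let $R$ be a unital associative ring and $n\ge1$. Let ${\cal P}^0_{LR}$ be the group of pairs $(P_1,P_2)$ of $n\times n$ permutation matrices each of which fixes the first standard basis vector, acting on $M_n(R)$ by $(P_1,P_2)(M)=P_1^{-1}MP_2$. Then ${\rm dom}(\Phi)$ and ${\rm dom}(\Psi)$ are invariant under this action, and $\Phi$ and $\Psi$ commute with it: $\Phi(P_1^{-1}AP_2)=P_1^{-1}\Phi(A)P_2$ for $A\in{\rm dom}(\Phi)$ and $\Psi(P_1^{-1}AP_2)=P_1^{-1}\Psi(A)P_2$ for $A\in{\rm dom}(\Psi)$, for all $(P_1,P_2)\in{\cal P}^0_{LR}$.
   Context: $R^*$: units of $R$. $M_n^*(R)$: invertible $n\times n$ matrices; $M_n^\star(R)$: matrices with all entries in $R^*$. $J_1(M)=M^{-1}$ on $M_n^*(R)$; $J_2(M)_{jk}=(M_{kj})^{-1}$ on $M_n^\star(R)$; $J=J_2\circ J_1$, where $g\circ f$ has domain $\{x\in{\rm dom}(f):f(x)\in{\rm dom}(g)\}$. $\widehat M_n(R)$: matrices whose first row and column consist of $1$'s. For $A=\{a_{j,k}\}\in M_n^\star(R)$, $\Lambda^L(A)_{j,k}=a_{1,1}a_{j,1}^{-1}a_{j,k}a_{1,k}^{-1}$. $\Phi(A)=J_2(\Lambda^L(A^{-1}))$ with ${\rm dom}(\Phi)={\rm dom}(J)\cap\widehat M_n(R)\cap M_n^\star(R)$, and $\Psi=J_2\circ\Phi\circ J_2$ with the natural composition domain. *)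

From HB Require Import structures.
From mathcomp Require Import all_boot all_order all_algebra all_fingroup.
From Stdlib Require Import ClassicalEpsilon.
Set Implicit Arguments. Unset Strict Implicit. Unset Printing Implicit Defensive.
Import GRing.Theory.
Local Open Scope ring_scope.

Definition is_inv (R : pzRingType) (n : nat) (M N : 'M[R]_n) : Prop :=
  M *m N = 1%:M /\ N *m M = 1%:M.

Definition invertible (R : pzRingType) (n : nat) (M : 'M[R]_n) : Prop :=
  exists N, is_inv M N.

(* J_1(M) = M^{-1} (meaningful on invertible M; the inverse is unique) *)
Definition J1 (R : pzRingType) (n : nat) (M : 'M[R]_n) : 'M[R]_n :=
  epsilon (inhabits M) (fun N => is_inv M N).

Definition all_units (R : unitRingType) (n : nat) (M : 'M[R]_n) : Prop :=
  forall i j, M i j \is a GRing.unit.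

Definition J2 (R : unitRingType) (n : nat) (M : 'M[R]_n) : 'M[R]_n :=
  \matrix_(j, k) (M k j)^-1.

(* dom(J) = dom(J2 o J1) *)
Definition dom_J (R : unitRingType) (n : nat) (M : 'M[R]_n) : Prop :=
  invertible M /\ all_units (J1 M).

Definition hatM (R : unitRingType) (n : nat) (M : 'M[R]_n.+1) : Prop :=
  (forall k, M ord0 k = 1) /\ (forall j, M j ord0 = 1).

Definition LambdaL (R : unitRingType) (n : nat) (A : 'M[R]_n.+1) : 'M[R]_n.+1 :=
  \matrix_(j, k) (A ord0 ord0 * (A j ord0)^-1 * A j k * (A ord0 k)^-1).

Definition Phi (R : unitRingType) (n : nat) (A : 'M[R]_n.+1) : 'M[R]_n.+1 :=
  J2 (LambdaL (J1 A)).

Definition dom_Phi (R : unitRingType) (n : nat) (A : 'M[R]_n.+1) : Prop :=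
  dom_J A /\ hatM A /\ all_units A.

Definition Psi (R : unitRingType) (n : nat) (A : 'M[R]_n.+1) : 'M[R]_n.+1 :=
  J2 (Phi (J2 A)).

Definition dom_Psi (R : unitRingType) (n : nat) (A : 'M[R]_n.+1) : Prop :=
  all_units A /\ dom_Phi (J2 A) /\ all_units (Phi (J2 A)).

Definition perm_fix_e1 (R : unitRingType) (n : nat) (P : 'M[R]_n.+1) : Prop :=
  exists s : 'S_n.+1, s ord0 = ord0 /\ P = perm_mx s.

Definition actLR (R : unitRingType) (n : nat) (P1 P2 M : 'M[R]_n.+1) : 'M[R]_n.+1 :=
  J1 P1 *m M *m P2.

From HB Require Import structures.
From mathcomp Require Import all_boot all_order all_algebra all_fingroup.
From Stdlib Require Import ClassicalEpsilon.
Set Implicit Arguments. Unset Strict Implicit. Unset Printing Implicit Defensive.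
Import GRing.Theory.
Local Open Scope ring_scope.

(* Permutation matrices fixing e1 act on entries as [A |-> mxsub s t A] with
   [s ord0 = t ord0 = ord0].  Every ingredient of Phi and Psi is equivariant
   under such reindexings: inversion swaps the roles of rows and columns, J2
   is entrywise inversion composed with transposition, and LambdaL only refers
   to the first row and column, which are left in place. *)

Section MatrixInverse.

Variables (R : pzRingType) (n : nat).
Implicit Types M N : 'M[R]_n.

Lemma J1P M : invertible M -> is_inv M (J1 M).
Proof. by move=> invM; apply: epsilon_spec. Qed.

Lemma is_inv_uniq M N N' : is_inv M N -> is_inv M N' -> N = N'.
Proof. by move=> [_ NM] [MN' _]; rewrite -[N]mulmx1 -MN' mulmxA NM mul1mx. Qed.

Lemma J1_is_inv M N : is_inv M N -> J1 M = N.
Proof. by move=> invMN; apply: (is_inv_uniq (J1P _) invMN); exists N. Qed.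

Lemma mulmx_mxsub (s t u : 'S_n) M N :
  mxsub s t M *m mxsub t u N = mxsub s u (M *m N).
Proof.
apply/matrixP=> i j; rewrite !mxE [RHS](reindex_inj (@perm_inj _ t)).
by apply: eq_bigr => k _; rewrite !mxE.
Qed.

Lemma mxsub1 (s : 'S_n) : mxsub s s (1%:M : 'M[R]_n) = 1%:M.
Proof. by apply/matrixP=> i j; rewrite !mxE (inj_eq perm_inj). Qed.

Lemma is_inv_mxsub (s t : 'S_n) M N :
  is_inv M N -> is_inv (mxsub s t M) (mxsub t s N).
Proof. by move=> [MN NM]; split; rewrite mulmx_mxsub ?MN ?NM mxsub1. Qed.

Lemma invertible_mxsub (s t : 'S_n) M :
  invertible M -> invertible (mxsub s t M).
Proof. by move=> [N invMN]; exists (mxsub t s N); apply: is_inv_mxsub. Qed.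

Lemma J1_mxsub (s t : 'S_n) M :
  invertible M -> J1 (mxsub s t M) = mxsub t s (J1 M).
Proof. by move=> /J1P /(is_inv_mxsub s t) /J1_is_inv. Qed.

Lemma is_inv_perm_mx (s : 'S_n) :
  is_inv (perm_mx s : 'M[R]_n) (perm_mx s^-1%g).
Proof. by split; rewrite -perm_mxM ?mulgV ?mulVg perm_mx1. Qed.

End MatrixInverse.

Section EntrywiseMaps.

Variables (R : unitRingType) (n : nat).

Lemma J2_mxsub (f g : 'I_n -> 'I_n) (A : 'M[R]_n) :
  J2 (mxsub f g A) = mxsub g f (J2 A).
Proof. by apply/matrixP=> i j; rewrite !mxE. Qed.

Lemma all_units_mxsub (f g : 'I_n -> 'I_n) (A : 'M[R]_n) :
  all_units A -> all_units (mxsub f g A).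
Proof. by move=> unitA i j; rewrite mxE. Qed.

End EntrywiseMaps.

Section FirstRowAndColumn.

Variables (R : unitRingType) (n : nat) (f g : 'I_n.+1 -> 'I_n.+1).
Hypotheses (f0 : f ord0 = ord0) (g0 : g ord0 = ord0).

Lemma LambdaL_mxsub (A : 'M[R]_n.+1) :
  LambdaL (mxsub f g A) = mxsub f g (LambdaL A).
Proof. by apply/matrixP=> i j; rewrite !mxE f0 g0. Qed.

Lemma hatM_mxsub (A : 'M[R]_n.+1) : hatM A -> hatM (mxsub f g A).
Proof. by move=> [row0 col0]; split=> k; rewrite mxE ?f0 ?g0. Qed.

End FirstRowAndColumn.

Section FixingFirstIndex.

Variables (R : unitRingType) (n : nat).
Implicit Types (s t : 'S_n.+1) (A : 'M[R]_n.+1).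

Lemma dom_Phi_mxsub s t A : s ord0 = ord0 -> t ord0 = ord0 ->
  dom_Phi A -> dom_Phi (mxsub s t A).
Proof.
move=> s0 t0 [[invA unitJ1A] [hatA unitA]].
split; [split | split].
- exact: invertible_mxsub.
- by rewrite J1_mxsub //; apply: all_units_mxsub.
- exact: hatM_mxsub.
- exact: all_units_mxsub.
Qed.

Lemma Phi_mxsub s t A : s ord0 = ord0 -> t ord0 = ord0 ->
  dom_Phi A -> Phi (mxsub s t A) = mxsub s t (Phi A).
Proof.
move=> s0 t0 [[invA _] _].
by rewrite /Phi J1_mxsub // (LambdaL_mxsub t0 s0) J2_mxsub.
Qed.

Lemma dom_Psi_mxsub s t A : s ord0 = ord0 -> t ord0 = ord0 ->
  dom_Psi A -> dom_Psi (mxsub s t A).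
Proof.
move=> s0 t0 [unitA [domJ2A unitPhiJ2A]].
split; first exact: all_units_mxsub.
rewrite J2_mxsub; split; first exact: dom_Phi_mxsub.
by rewrite Phi_mxsub //; apply: all_units_mxsub.
Qed.

Lemma Psi_mxsub s t A : s ord0 = ord0 -> t ord0 = ord0 ->
  dom_Psi A -> Psi (mxsub s t A) = mxsub s t (Psi A).
Proof.
move=> s0 t0 [_ [domJ2A _]].
by rewrite /Psi J2_mxsub Phi_mxsub // J2_mxsub.
Qed.

End FixingFirstIndex.

Lemma actLR_perm_mx (R : unitRingType) n (s1 s2 : 'S_n.+1) (A : 'M[R]_n.+1) :
  actLR (perm_mx s1) (perm_mx s2) A = mxsub s1^-1%g s2^-1%g A.
Proof.
rewrite /actLR (J1_is_inv (is_inv_perm_mx R s1)) -row_permE.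
rewrite -[s2 in perm_mx s2]invgK -col_permE.
by apply/matrixP=> i j; rewrite 3!mxE.
Qed.

Theorem lemma4 (R : unitRingType) (n : nat) (P1 P2 : 'M[R]_n.+1) :
  perm_fix_e1 P1 -> perm_fix_e1 P2 ->
  (forall A, dom_Phi A -> dom_Phi (actLR P1 P2 A)) /\
  (forall A, dom_Psi A -> dom_Psi (actLR P1 P2 A)) /\
  (forall A, dom_Phi A -> Phi (actLR P1 P2 A) = actLR P1 P2 (Phi A)) /\
  (forall A, dom_Psi A -> Psi (actLR P1 P2 A) = actLR P1 P2 (Psi A)).
Proof.
have invg_fix0 (s : 'S_n.+1) : s ord0 = ord0 -> s^-1%g ord0 = ord0.
  by move=> s0; rewrite -{1}s0 permK.
move=> [s1 [/invg_fix0 s1V0 ->]] [s2 [/invg_fix0 s2V0 ->]].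
split; [|split; [|split]] => A domA; rewrite !actLR_perm_mx.
- exact: (dom_Phi_mxsub s1V0 s2V0 domA).
- exact: (dom_Psi_mxsub s1V0 s2V0 domA).
- exact: (Phi_mxsub s1V0 s2V0 domA).
- exact: (Psi_mxsub s1V0 s2V0 domA).
Qed.
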